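(* If there is a language $L \subseteq \mathbb{N}$ capturing a functional property $\psi \subseteq \mathbb{N}$, then $\psi \in \Sigma^0_3$.
   Context: Programs (generators) are identified with natural numbers in a fixed universal programming language; $\varphi_g$ is the partial computable function computed by $g$. A property $\psi \subseteq \mathbb{N}$ is functional if whenever $\varphi_g = \varphi_{g'}$, $\psi(g) \leftrightarrow \psi(g')$. A language $L \subseteq \mathbb{N}$ captures $\psi$ if $L$ is decidable, every $g \in L$ satisfies $\psi$, and for every $g' \in \mathbb{N}$ satisfying $\psi$ there is $g \in L$ with $\varphi_g = \varphi_{g'}$. $\Sigma^0_3$ is the corresponding class of the arithmetical hierarchy. *)

From HB Require Import structures.
From mathcomp Require Import all_boot.
Set Implicit Arguments. Unset Strict Implicit. Unset Printing Implicit Defensive.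

(* Cantor pairing: enumeration (0,0),(1,0),(0,1),(2,0),(1,1),(0,2),... *)
Definition cpair (a b : nat) : nat := ((a + b) * (a + b).+1)./2 + b.
Fixpoint cunpair (n : nat) : nat * nat :=
  match n with
  | 0 => (0, 0)
  | n'.+1 => let: (a, b) := cunpair n' in
             match a with 0 => (b.+1, 0) | a'.+1 => (a', b.+1) end
  end.

Inductive code : Type :=
  | CZero
  | CSucc
  | CFst
  | CSnd
  | CPair of code & code
  | CComp of code & code   (* x |-> f (g x) *)
  | CRec of code & code    (* h <a,0> = f a ; h <a,n+1> = g <<a,n>, h <a,n>> *)
  | CMu of code.           (* x |-> least m with f <x,m> = 0, f <x,i> defined for i<m *)

Fixpoint code_to_tree (c : code) : GenTree.tree unit :=
  match c with
  | CZero => GenTree.Node 0 [::]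
  | CSucc => GenTree.Node 1 [::]
  | CFst => GenTree.Node 2 [::]
  | CSnd => GenTree.Node 3 [::]
  | CPair f g => GenTree.Node 4 [:: code_to_tree f; code_to_tree g]
  | CComp f g => GenTree.Node 5 [:: code_to_tree f; code_to_tree g]
  | CRec f g => GenTree.Node 6 [:: code_to_tree f; code_to_tree g]
  | CMu f => GenTree.Node 7 [:: code_to_tree f]
  end.

Fixpoint tree_to_code (t : GenTree.tree unit) : option code :=
  match t with
  | GenTree.Node 0 [::] => Some CZero
  | GenTree.Node 1 [::] => Some CSucc
  | GenTree.Node 2 [::] => Some CFst
  | GenTree.Node 3 [::] => Some CSnd
  | GenTree.Node 4 [:: f; g] =>
      obind (fun f' => omap (CPair f') (tree_to_code g)) (tree_to_code f)
  | GenTree.Node 5 [:: f; g] =>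
      obind (fun f' => omap (CComp f') (tree_to_code g)) (tree_to_code f)
  | GenTree.Node 6 [:: f; g] =>
      obind (fun f' => omap (CRec f') (tree_to_code g)) (tree_to_code f)
  | GenTree.Node 7 [:: f] => omap CMu (tree_to_code f)
  | _ => None
  end.

Lemma code_treeK : pcancel code_to_tree tree_to_code.
Proof. by elim=> //= [f -> g ->|f -> g ->|f -> g ->|f ->]. Qed.

HB.instance Definition _ := Countable.copy code (pcan_type code_treeK).

(* Programs (generators) are natural numbers: g denotes the program
   decoded from g (non-codes denote the constant-zero program). *)
Definition decode (g : nat) : code := odflt CZero (unpickle g).

Fixpoint eval (k : nat) (c : code) (x : nat) {struct k} : option nat :=
  match k with
  | 0 => None
  | k'.+1 =>
    match c with
    | CZero => Some 0
    | CSucc => Some x.+1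
    | CFst => Some (cunpair x).1
    | CSnd => Some (cunpair x).2
    | CPair f g =>
        obind (fun a => omap (cpair a) (eval k' g x)) (eval k' f x)
    | CComp f g => obind (eval k' f) (eval k' g x)
    | CRec f g =>
        let: (a, n) := cunpair x in
        (fix r (n : nat) : option nat :=
           match n with
           | 0 => eval k' f a
           | n'.+1 => obind (fun v => eval k' g (cpair (cpair a n') v)) (r n')
           end) n
    | CMu f =>
        (fix search (i m : nat) : option nat :=
           match i with
           | 0 => None
           | i'.+1 =>
             match eval k' f (cpair x m) with
             | Some 0 => Some m
             | Some _ => search i' m.+1
             | None => None
             end
           end) k' 0
    end
  end.

Definition phi (g x y : nat) : Prop := exists k, eval k (decode g) x = Some y.

Definition same_fun (g g' : nat) : Prop := forall x y, phi g x y <-> phi g' x y.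

Definition decidable_set (A : nat -> Prop) : Prop :=
  exists e, forall n, (A n -> phi e n 1) /\ (~ A n -> phi e n 0).

Definition functional (psi : nat -> Prop) : Prop :=
  forall g g', same_fun g g' -> (psi g <-> psi g').

Definition captures (L psi : nat -> Prop) : Prop :=
  [/\ decidable_set L,
      (forall g, L g -> psi g) &
      (forall g', psi g' -> exists2 g, L g & same_fun g g')].

Definition Sigma03 (psi : nat -> Prop) : Prop :=
  exists R : nat -> Prop, decidable_set R /\
    forall g, psi g <->
      exists a, forall b, exists c, R (cpair g (cpair a (cpair b c))).

From mathcomp Require Import all_boot zify.
From Stdlib Require Import ClassicalEpsilon.
Set Implicit Arguments. Unset Strict Implicit. Unset Printing Implicit Defensive.

(* Since [L] captures the functional property [psi], [psi g] holds iff some [a] with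
   [L a] computes the same partial function as [g].  [L] is decidable, and equality of
   [phi_g] and [phi_a] is Pi^0_2: for every input [x], output [y] and fuel [k] there
   are a fuel [k'] and a step count [n] such that, after [n] steps, both evaluations
   (of [g] with fuel [k] and of [a] with fuel [k'], and symmetrically) have halted,
   and output [y] from the first forces output [y] from the second.  The substance is
   that this matrix is decided by a program of the given language: Goedel numbers are
   decoded, and [eval] is simulated by a small-step machine, by primitive recursive
   expressions, which compile to programs. *)

Definition cunpair_step (p : nat * nat) : nat * nat :=
  let: (a, b) := p in if a is a'.+1 then (a', b.+1) else (b.+1, 0).

Lemma cunpairS n : cunpair n.+1 = cunpair_step (cunpair n).
Proof. by rewrite /=; case: (cunpair n). Qed.

Lemma half_triangleS s : (s.+1 * s.+2)./2 = (s * s.+1)./2 + s.+1.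
Proof.
have -> : s.+1 * s.+2 = s * s.+1 + s.+1.*2 by rewrite -mul2n mulnC -mulnDl addn2.
by rewrite halfD odd_double andbF add0n doubleK.
Qed.

Lemma cpair_step p :
  cpair (cunpair_step p).1 (cunpair_step p).2 = (cpair p.1 p.2).+1.
Proof.
case: p => [[|a] b]; rewrite /cpair /cunpair_step; last by rewrite addnS addSn addnS.
by rewrite !addn0 add0n half_triangleS addnS.
Qed.

Lemma cunpairK n : cpair (cunpair n).1 (cunpair n).2 = n.
Proof. by elim: n => // n IH; rewrite cunpairS cpair_step IH. Qed.

Lemma cunpair_surj a b : exists n, cunpair n = (a, b).
Proof.
move: {2}(a + b) (erefl (a + b)) => s; elim: s a b => [|s IHs] a b.
  by case: a b => [|a] [|b] // _; exists 0.
elim: b a => [|b IHb] a.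
  rewrite addn0 => ->; have [n Hn] := IHs 0 s erefl.
  by exists n.+1; rewrite cunpairS Hn.
rewrite addnS => -[Hs]; have [n Hn] : exists n, cunpair n = (a.+1, b).
  by apply: IHb; rewrite addSn Hs.
by exists n.+1; rewrite cunpairS Hn.
Qed.

Lemma cpairK a b : cunpair (cpair a b) = (a, b).
Proof.
have [n Hn] := cunpair_surj a b.
by have -> : cpair a b = n by rewrite -[RHS]cunpairK Hn.
Qed.

Lemma cpair1 a b : (cunpair (cpair a b)).1 = a. Proof. by rewrite cpairK. Qed.
Lemma cpair2 a b : (cunpair (cpair a b)).2 = b. Proof. by rewrite cpairK. Qed.

Lemma leq_cpairl a b : a <= cpair a b.
Proof.
rewrite /cpair; apply: leq_trans (leq_addr b a) (leq_trans _ (leq_addr _ _)).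
by case: (a + b) => // s; rewrite half_triangleS leq_addl.
Qed.

Lemma leq_cpairr a b : b <= cpair a b.
Proof. exact: leq_addl. Qed.

Lemma leq_cunpair1 n : (cunpair n).1 <= n.
Proof. by rewrite -{2}(cunpairK n) leq_cpairl. Qed.

Lemma leq_cunpair2 n : (cunpair n).2 <= n.
Proof. by rewrite -{2}(cunpairK n) leq_cpairr. Qed.

Lemma cpair4_surj z : exists g a b c, z = cpair g (cpair a (cpair b c)).
Proof.
exists (cunpair z).1, (cunpair (cunpair z).2).1, (cunpair (cunpair (cunpair z).2).2).1.
by exists (cunpair (cunpair (cunpair z).2).2).2; rewrite !cunpairK.
Qed.

Definition rec_loop (ef eg : nat -> option nat) (a : nat) :=
  fix r (n : nat) : option nat :=
    if n is n'.+1 then obind (fun v => eg (cpair (cpair a n') v)) (r n') else ef a.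

Definition mu_loop (ef : nat -> option nat) (x : nat) :=
  fix search (i m : nat) : option nat :=
    if i is i'.+1 then
      match ef (cpair x m) with
      | Some 0 => Some m
      | Some _ => search i' m.+1
      | None => None
      end
    else None.

Lemma rec_loopS ef eg a n : rec_loop ef eg a n.+1 =
  obind (fun v => eg (cpair (cpair a n) v)) (rec_loop ef eg a n).
Proof. by []. Qed.

Lemma mu_loopS ef x i m : mu_loop ef x i.+1 m =
  match ef (cpair x m) with
  | Some 0 => Some m
  | Some _ => mu_loop ef x i m.+1
  | None => None
  end.
Proof. by []. Qed.

Lemma eval_CPair k f g x : eval k.+1 (CPair f g) x =
  obind (fun a => omap (cpair a) (eval k g x)) (eval k f x).
Proof. by []. Qed.

Lemma eval_CComp k f g x : eval k.+1 (CComp f g) x = obind (eval k f) (eval k g x).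
Proof. by []. Qed.

Lemma eval_CRec k f g x : eval k.+1 (CRec f g) x =
  rec_loop (eval k f) (eval k g) (cunpair x).1 (cunpair x).2.
Proof. by rewrite /=; case: (cunpair x). Qed.

Lemma eval_CMu k f x : eval k.+1 (CMu f) x = mu_loop (eval k f) x k 0.
Proof. by []. Qed.

Lemma eval_fuelS k c x y : eval k c x = Some y -> eval k.+1 c x = Some y.
Proof.
elim: k c x y => [|k IH] // [||||f g|f g|f g|f] x y //.
- rewrite !eval_CPair; case E1: (eval k f x) => [a|] //; rewrite (IH _ _ _ E1).
  by case E2: (eval k g x) => [b|] //; rewrite (IH _ _ _ E2).
- rewrite !eval_CComp; case E: (eval k g x) => [a|] //; rewrite (IH _ _ _ E).
  exact: IH.
- rewrite !eval_CRec; move: (cunpair x).1 (cunpair x).2 => a n.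
  elim: n y => [|n IHn] y; first exact: IH.
  rewrite !rec_loopS.
  by case E: (rec_loop _ _ a n) => [v|] //; rewrite (IHn _ E) /= => /IH.
- rewrite !eval_CMu.
  suff mu_mono i j m : i <= j -> mu_loop (eval k f) x i m = Some y ->
      mu_loop (eval k.+1 f) x j m = Some y by exact: mu_mono.
  elim: i j m => [|i IHi] [|j] m // Hij; rewrite !mu_loopS.
  by case E: (eval k f (cpair x m)) => [[|v]|] //; rewrite (IH _ _ _ E) //; apply: IHi.
Qed.

Lemma eval_fuel_mono k k' c x y :
  k <= k' -> eval k c x = Some y -> eval k' c x = Some y.
Proof. by move=> /subnK <-; elim: (k' - k) => // d IHd /IHd /eval_fuelS. Qed.

Definition computable (f : nat -> nat) :=
  exists c : code, forall x, exists k, eval k c x = Some (f x).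

Lemma computable_ext f g : f =1 g -> computable f -> computable g.
Proof. by move=> fg [c Hc]; exists c => x; rewrite -fg. Qed.

Lemma computable_id : computable id.
Proof. by exists (CPair CFst CSnd) => x; exists 2; rewrite /= cunpairK. Qed.

Lemma computable_zero : computable (fun=> 0).
Proof. by exists CZero => x; exists 1. Qed.

Lemma computable_succ : computable succn.
Proof. by exists CSucc => x; exists 1. Qed.

Lemma computable_fst : computable (fun x => (cunpair x).1).
Proof. by exists CFst => x; exists 1. Qed.

Lemma computable_snd : computable (fun x => (cunpair x).2).
Proof. by exists CSnd => x; exists 1. Qed.

Lemma computable_comp f g : computable f -> computable g -> computable (f \o g).
Proof.
move=> [cf Hf] [cg Hg]; exists (CComp cf cg) => x.
have [k2 H2] := Hg x; have [k1 H1] := Hf (g x).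
exists (maxn k1 k2).+1; rewrite eval_CComp (eval_fuel_mono (leq_maxr k1 k2) H2).
exact: eval_fuel_mono (leq_maxl k1 k2) H1.
Qed.

Lemma computable_pair f g :
  computable f -> computable g -> computable (fun x => cpair (f x) (g x)).
Proof.
move=> [cf Hf] [cg Hg]; exists (CPair cf cg) => x.
have [k2 H2] := Hg x; have [k1 H1] := Hf x.
exists (maxn k1 k2).+1; rewrite eval_CPair (eval_fuel_mono (leq_maxl k1 k2) H1) /=.
by rewrite (eval_fuel_mono (leq_maxr k1 k2) H2).
Qed.

Fixpoint primrec (f g : nat -> nat) (a n : nat) : nat :=
  if n is n'.+1 then g (cpair (cpair a n') (primrec f g a n')) else f a.

Lemma primrecS f g a n : primrec f g a n.+1 = g (cpair (cpair a n) (primrec f g a n)).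
Proof. by []. Qed.

Lemma rec_loop_fuel_mono k k' f g a n v : k <= k' ->
  rec_loop (eval k f) (eval k g) a n = Some v ->
  rec_loop (eval k' f) (eval k' g) a n = Some v.
Proof.
move=> le_kk'; have := @eval_fuel_mono k.+1 k'.+1 (CRec f g) (cpair a n) v le_kk'.
by rewrite !eval_CRec cpair1 cpair2.
Qed.

Lemma computable_primrec f g : computable f -> computable g ->
  computable (fun x => primrec f g (cunpair x).1 (cunpair x).2).
Proof.
move=> [cf Hf] [cg Hg]; exists (CRec cf cg) => x.
move: (cunpair x).1 (cunpair x).2 (fun k => eval_CRec k cf cg x) => a n eval_rec.
suff [k Hk] : exists k, rec_loop (eval k cf) (eval k cg) a n = Some (primrec f g a n).
  by exists k.+1; rewrite eval_rec.
elim: n {eval_rec} => [|n [k Hk]]; first exact: Hf.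
have [k2 H2] := Hg (cpair (cpair a n) (primrec f g a n)).
exists (maxn k k2); rewrite rec_loopS (rec_loop_fuel_mono (leq_maxl k k2) Hk) /=.
exact: eval_fuel_mono (leq_maxr k k2) H2.
Qed.

Lemma decidable_set_computable (p : pred nat) : computable p -> decidable_set p.
Proof.
move=> [c Hc]; exists (pickle c) => n; have [k Hk] := Hc n.
by split=> [pn|/negP/negbTE pn]; exists k; rewrite /decode pickleK /= Hk pn.
Qed.

Definition decide (P : nat -> Prop) n : bool :=
  if excluded_middle_informative (P n) then true else false.

Lemma computable_decide L : decidable_set L -> computable (decide L).
Proof.
move=> [e He]; exists (decode e) => n; rewrite /decide.
case: (excluded_middle_informative (L n)) => Ln.
- by have [k Hk] := (He n).1 Ln; exists k.
- by have [k Hk] := (He n).2 Ln; exists k.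
Qed.

Lemma decideP (P : nat -> Prop) n : reflect (P n) (decide P n).
Proof. by rewrite /decide; case: (excluded_middle_informative (P n)); constructor. Qed.

(** * Primitive recursive expressions *)

Inductive prexp : Type :=
  | PVar
  | PZero
  | PSucc of prexp
  | PFst of prexp
  | PSnd of prexp
  | PPair of prexp & prexp
  | PComp of prexp & prexp
  | PRec of prexp & prexp.

Fixpoint den (e : prexp) (x : nat) : nat :=
  match e with
  | PVar => x
  | PZero => 0
  | PSucc e => (den e x).+1
  | PFst e => (cunpair (den e x)).1
  | PSnd e => (cunpair (den e x)).2
  | PPair e1 e2 => cpair (den e1 x) (den e2 x)
  | PComp e1 e2 => den e1 (den e2 x)
  | PRec e1 e2 => primrec (den e1) (den e2) (cunpair x).1 (cunpair x).2
  end.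

Theorem computable_den e : computable (den e).
Proof.
elim: e => /= [||e IH|e IH|e IH|e1 IH1 e2 IH2|e1 IH1 e2 IH2|e1 IH1 e2 IH2].
- exact: computable_id.
- exact: computable_zero.
- exact: computable_comp computable_succ IH.
- exact: computable_comp computable_fst IH.
- exact: computable_comp computable_snd IH.
- exact: computable_pair.
- exact: computable_comp.
- exact: computable_primrec.
Qed.

Lemma den_PVar x : den PVar x = x. Proof. by []. Qed.
Lemma den_PZero x : den PZero x = 0. Proof. by []. Qed.
Lemma den_PSucc e x : den (PSucc e) x = (den e x).+1. Proof. by []. Qed.
Lemma den_PFst e x : den (PFst e) x = (cunpair (den e x)).1. Proof. by []. Qed.
Lemma den_PSnd e x : den (PSnd e) x = (cunpair (den e x)).2. Proof. by []. Qed.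
Lemma den_PPair e1 e2 x : den (PPair e1 e2) x = cpair (den e1 x) (den e2 x).
Proof. by []. Qed.
Lemma den_PComp e1 e2 x : den (PComp e1 e2) x = den e1 (den e2 x).
Proof. by []. Qed.

(* Inside the step expression of [PRec], the input is <<a, n>, previous value>. *)
Local Notation RA := (PFst (PFst PVar)).
Local Notation RN := (PSnd (PFst PVar)).
Local Notation RV := (PSnd PVar).

(* Each derived expression is locked with its own key, so that rewriting with
   [den_PComp] & co. cannot unfold it: it is only opened by its [den_] lemma. *)
Fact prec_key : unit. Proof. by []. Qed.
Definition prec f g ea en := locked_with prec_key (PComp (PRec f g) (PPair ea en)).

Lemma den_prec f g ea en x :
  den (prec f g ea en) x = primrec (den f) (den g) (den ea x) (den en x).
Proof. by rewrite /prec unlock /= cpair1 cpair2. Qed.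

Fixpoint pconst n := if n is n'.+1 then PSucc (pconst n') else PZero.

Lemma den_pconst n x : den (pconst n) x = n.
Proof. by elim: n => //= n ->. Qed.

Fact ppred_key : unit. Proof. by []. Qed.
Definition ppred e := locked_with ppred_key (prec PZero RN PZero e).

Lemma den_ppred e x : den (ppred e) x = (den e x).-1.
Proof.
rewrite /ppred unlock den_prec; case: (den e x) => // n.
by rewrite primrecS den_PSnd den_PFst cpair1 cpair2.
Qed.

Fact padd_key : unit. Proof. by []. Qed.
Definition padd e1 e2 := locked_with padd_key (prec PVar (PSucc RV) e1 e2).

Lemma den_padd e1 e2 x : den (padd e1 e2) x = den e1 x + den e2 x.
Proof.
rewrite /padd unlock den_prec; elim: (den e2 x) => [|n IH]; first by rewrite addn0.
by rewrite primrecS den_PSucc den_PSnd cpair2 IH addnS.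
Qed.

Fact psub_key : unit. Proof. by []. Qed.
Definition psub e1 e2 := locked_with psub_key (prec PVar (ppred RV) e1 e2).

Lemma den_psub e1 e2 x : den (psub e1 e2) x = den e1 x - den e2 x.
Proof.
rewrite /psub unlock den_prec; elim: (den e2 x) => [|n IH]; first by rewrite subn0.
by rewrite primrecS den_ppred den_PSnd cpair2 IH subnS.
Qed.

Fact pite_key : unit. Proof. by []. Qed.
Definition pite c e1 e2 :=
  locked_with pite_key (prec (PFst PVar) (PSnd RA) (PPair e1 e2) c).

Lemma den_pite c e1 e2 x :
  den (pite c e1 e2) x = if den c x is 0 then den e1 x else den e2 x.
Proof.
rewrite /pite unlock den_prec; case: (den c x) => [|n]; first exact: cpair1.
by rewrite primrecS den_PSnd !den_PFst den_PVar !cpair1 cpair2.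
Qed.

Fact peq_key : unit. Proof. by []. Qed.
Definition peq e1 e2 :=
  locked_with peq_key (pite (padd (psub e1 e2) (psub e2 e1)) (pconst 1) PZero).

Lemma den_peq e1 e2 x : den (peq e1 e2) x = (den e1 x == den e2 x).
Proof.
rewrite /peq unlock den_pite den_padd !den_psub den_pconst.
move: (den e1 x) (den e2 x) => a b.
have [->|neq] := eqVneq a b; first by rewrite subnn.
by have /prednK <- : 0 < a - b + (b - a) by lia.
Qed.

Fact pand_key : unit. Proof. by []. Qed.
Definition pand a b := locked_with pand_key (pite a PZero b).

Lemma den_pand a b x : den (pand a b) x = if den a x is 0 then 0 else den b x.
Proof. by rewrite /pand unlock; exact: den_pite. Qed.

Fact pnz_key : unit. Proof. by []. Qed.
Definition pnz e := locked_with pnz_key (pite e PZero (pconst 1)).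

Lemma den_pnz e x : den (pnz e) x = (den e x != 0).
Proof. by rewrite /pnz unlock den_pite den_pconst; case: (den e x). Qed.

Fact pisz_key : unit. Proof. by []. Qed.
Definition pisz e := locked_with pisz_key (pite e (pconst 1) PZero).

Lemma den_pisz e x : den (pisz e) x = (den e x == 0).
Proof. by rewrite /pisz unlock den_pite den_pconst; case: (den e x). Qed.

Fact piter_key : unit. Proof. by []. Qed.
Definition piter f e0 en := locked_with piter_key (prec PVar (PComp f RV) e0 en).

Lemma den_piter f e0 en x : den (piter f e0 en) x = iter (den en x) (den f) (den e0 x).
Proof.
rewrite /piter unlock den_prec; elim: (den en x) => // n IH.
by rewrite primrecS den_PComp den_PSnd cpair2 IH.
Qed.

Definition lcons a l := (cpair a l).+1.
Definition lhead l := (cunpair l.-1).1.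
Definition ltail l := (cunpair l.-1).2.

Fixpoint lenc (s : seq nat) : nat := if s is a :: s' then lcons a (lenc s') else 0.

Lemma lhead_cons a l : lhead (lcons a l) = a. Proof. exact: cpair1. Qed.
Lemma ltail_cons a l : ltail (lcons a l) = l. Proof. exact: cpair2. Qed.

Lemma ltn_lcons a l : l < lcons a l.
Proof. by rewrite ltnS leq_cpairr. Qed.

Lemma lhead_leq l : lhead l <= l.
Proof. by case: l => // l; rewrite ltnW // ltnS leq_cunpair1. Qed.

Lemma ltail_leq l : ltail l <= l.
Proof. by case: l => // l; rewrite ltnW // ltnS leq_cunpair2. Qed.

Fact pcons_key : unit. Proof. by []. Qed.
Definition pcons e1 e2 := locked_with pcons_key (PSucc (PPair e1 e2)).
Fact phead_key : unit. Proof. by []. Qed.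
Definition phead e := locked_with phead_key (PFst (ppred e)).
Fact ptail_key : unit. Proof. by []. Qed.
Definition ptail e := locked_with ptail_key (PSnd (ppred e)).

Lemma den_pcons e1 e2 x : den (pcons e1 e2) x = lcons (den e1 x) (den e2 x).
Proof. by rewrite /pcons unlock. Qed.
Lemma den_phead e x : den (phead e) x = lhead (den e x).
Proof. by rewrite /phead unlock den_PFst den_ppred. Qed.
Lemma den_ptail e x : den (ptail e) x = ltail (den e x).
Proof. by rewrite /ptail unlock den_PSnd den_ppred. Qed.

Fixpoint hist (G : nat -> nat) n :=
  if n is n'.+1 then lcons (G (cpair n' (hist G n'))) (hist G n') else 0.

(* Course-of-values recursion: [pcvrec G] computes the [F] with
   [F n = G <n, [F (n-1); ...; F 0]>]. *)
Fact pcvrec_key : unit. Proof. by []. Qed.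
Definition pcvrec G := locked_with pcvrec_key
  (PComp G (PPair PVar (prec PZero (pcons (PComp G (PPair RN RV)) RV) PZero PVar))).

Lemma den_pcvrec G x : den (pcvrec G) x = den G (cpair x (hist (den G) x)).
Proof.
rewrite /pcvrec unlock den_PComp den_PPair den_PVar den_prec den_PZero den_PVar.
congr (den G (cpair x _)).
elim: x => // n IH; rewrite primrecS den_pcons IH.
by do 2 rewrite ?den_PComp ?den_PPair ?den_PSnd ?den_PFst ?cpair1 ?cpair2.
Qed.

Definition hist_at G n i := lhead (iter (n.-1 - i) ltail (hist G n)).

Lemma hist_at_lt G n i : i < n -> hist_at (den G) n i = den (pcvrec G) i.
Proof.
rewrite den_pcvrec /hist_at; elim: n => // n IH.
rewrite ltnS leq_eqVlt => /orP [/eqP ->|lt_in]; first by rewrite subnn lhead_cons.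
have -> : n - i = (n.-1 - i).+1 by case: n IH lt_in => // n _ lt_in; rewrite subSn.
by rewrite iterSr ltail_cons IH.
Qed.

Fact plook_key : unit. Proof. by []. Qed.
Definition plook ei := locked_with plook_key
  (phead (piter (ptail PVar) (PSnd PVar) (psub (ppred (PFst PVar)) ei))).

Lemma den_plook G ei n :
  den (plook ei) (cpair n (hist G n)) = hist_at G n (den ei (cpair n (hist G n))).
Proof.
rewrite /plook unlock den_phead den_piter den_psub den_ppred den_PSnd den_PFst den_PVar.
rewrite cpair1 cpair2.
by congr lhead; apply: eq_iter => y; rewrite den_ptail.
Qed.

Fact phalfodd_key : unit. Proof. by []. Qed.
Definition phalfodd e := locked_with phalfodd_key (prec PZero
  (pite (PSnd RV) (PPair (PFst RV) (pconst 1)) (PPair (PSucc (PFst RV)) PZero)) PZero e).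

Lemma den_phalfodd e x : den (phalfodd e) x = cpair (den e x)./2 (odd (den e x)).
Proof.
rewrite /phalfodd unlock den_prec den_PZero; elim: (den e x) => // n IH.
rewrite primrecS den_pite !den_PSnd !den_PPair !den_PFst !den_PSnd den_PSucc den_PZero.
rewrite den_pconst !cpair2 IH cpair1 cpair2 den_PFst den_PSnd cpair2 cpair1.
by rewrite -[n.+1./2]/(uphalf n) uphalf_half /=; case: (odd n).
Qed.

Fact phalf_key : unit. Proof. by []. Qed.
Definition phalf e := locked_with phalf_key (PFst (phalfodd e)).
Fact podd_key : unit. Proof. by []. Qed.
Definition podd e := locked_with podd_key (PSnd (phalfodd e)).

Lemma den_phalf e x : den (phalf e) x = (den e x)./2.
Proof. by rewrite /phalf unlock den_PFst den_phalfodd cpair1. Qed.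

Lemma den_podd e x : den (podd e) x = odd (den e x).
Proof. by rewrite /podd unlock den_PSnd den_phalfodd cpair2. Qed.

Ltac den_simpl := repeat progress rewrite
  ?den_PVar ?den_PZero ?den_PSucc ?den_PFst ?den_PSnd ?den_PPair ?den_PComp
  ?den_pconst ?den_ppred ?den_padd ?den_psub ?den_pite ?den_peq ?den_pand ?den_pnz
  ?den_pisz ?den_piter ?den_pcons ?den_phead ?den_ptail ?den_plook
  ?den_phalf ?den_podd ?cpair1 ?cpair2 ?lhead_cons ?ltail_cons.

(** * Decoding Goedel numbers *)

(* The argument [n] inside the step of a course-of-values recursion. *)
Local Notation CVN := (PFst PVar).

Lemma seqdecode_odd g : odd g -> CodeSeq.decode g = 0 :: CodeSeq.decode g./2.
Proof.
move=> odd_g; have E : g = CodeSeq.code (0 :: CodeSeq.decode g./2).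
  by rewrite /= expn0 mul1n CodeSeq.decodeK -{1}[g]odd_double_half odd_g add1n.
by rewrite {1}E CodeSeq.codeK.
Qed.

Lemma seqdecode_even g : 0 < g -> ~~ odd g -> exists t l,
  CodeSeq.decode g./2 = t :: l /\ CodeSeq.decode g = t.+1 :: l.
Proof.
move=> g_gt0 even_g; case E: (CodeSeq.decode g./2) => [|t l].
  have : CodeSeq.code (CodeSeq.decode g./2) = 0 by rewrite E.
  rewrite CodeSeq.decodeK => half0.
  by move: g_gt0; rewrite -[g]odd_double_half half0 (negbTE even_g).
exists t, l; split => //; have {}E : g = CodeSeq.code (t.+1 :: l).
  rewrite /= expnS -mulnA -[2 ^ t * _]/(CodeSeq.code (t :: l)) -E CodeSeq.decodeK.
  by rewrite mul2n -[LHS]odd_double_half (negbTE even_g).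
by rewrite {1}E CodeSeq.codeK.
Qed.

Fact pseqdecode_key : unit. Proof. by []. Qed.
Definition pseqdecode := locked_with pseqdecode_key (pcvrec (pite CVN PZero
  (pite (podd CVN) (pcons (PSucc (phead (plook (phalf CVN)))) (ptail (plook (phalf CVN))))
        (pcons PZero (plook (phalf CVN)))))).

Lemma den_pseqdecode g : den pseqdecode g = lenc (CodeSeq.decode g).
Proof.
rewrite /pseqdecode unlock.
elim/ltn_ind: g => -[|g] IH; rewrite den_pcvrec; den_simpl => //.
have half_lt : g.+1./2 < g.+1 by lia.
rewrite hist_at_lt // IH //.
case odd_g: (odd g.+1); first by rewrite (seqdecode_odd odd_g).
have [t [l [-> ->]]] := seqdecode_even (ltn0Sn g) (negbT odd_g).
by rewrite /= lhead_cons ltail_cons.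
Qed.

(* The items of the [GenTree] encoding of a tree are pickled at type [nat + unit]. *)
Definition unpickle_sum (e : nat) : option (nat + unit) :=
  match CodeSeq.decode e with
  | [:: ni; nx] => if CodeSeq.decode nx is _ :: _ then Some (inr tt)
                   else omap inl (ohead (CodeSeq.decode ni))
  | _ => None
  end.

Lemma unpickle_sumE e : unpickle e = unpickle_sum e.
Proof.
rewrite /unpickle /= /pcomp /unpickle /= /pcomp /unpickle /= /unpickle_tagged.
rewrite /unpickle_sum.
case: (CodeSeq.decode e) => [|ni [|nx [|? ?]]] //=.
case: (CodeSeq.decode nx) => [|a l] //=.
by rewrite /sum_of_opair /pair_of_tag /=; case: (CodeSeq.decode ni).
Qed.

Lemma unpickle_codeE g : (unpickle g : option code) =
  obind tree_to_code (GenTree.decode (pmap unpickle_sum (CodeSeq.decode g))).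
Proof.
rewrite /unpickle /= /pcomp; congr obind; rewrite /unpickle /= /pcomp /=.
by congr GenTree.decode; apply: eq_pmap => e; apply: unpickle_sumE.
Qed.

Fact pdecode_seq_key : unit. Proof. by []. Qed.
Definition pdecode_seq e := locked_with pdecode_seq_key (PComp pseqdecode e).

Lemma den_pdecode_seq e x : den (pdecode_seq e) x = lenc (CodeSeq.decode (den e x)).
Proof. by rewrite /pdecode_seq unlock den_PComp den_pseqdecode. Qed.

Definition sum_enc (o : option (nat + unit)) :=
  match o with None => 0 | Some (inr _) => 1 | Some (inl n) => n.+2 end.

Fact punpickle_sum_key : unit. Proof. by []. Qed.
Definition punpickle_sum := locked_with punpickle_sum_key (
  pite (pand (pnz (pdecode_seq PVar))
          (pand (pnz (ptail (pdecode_seq PVar))) (pisz (ptail (ptail (pdecode_seq PVar))))))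
    PZero
    (pite (pdecode_seq (phead (ptail (pdecode_seq PVar))))
       (pite (pdecode_seq (phead (pdecode_seq PVar))) PZero
             (PSucc (PSucc (phead (pdecode_seq (phead (pdecode_seq PVar)))))))
       (pconst 1))).

Lemma den_punpickle_sum e : den punpickle_sum e = sum_enc (unpickle_sum e).
Proof.
rewrite /punpickle_sum unlock /unpickle_sum.
do 4 (den_simpl; rewrite ?den_pdecode_seq).
case: (CodeSeq.decode e) => [|ni [|nx [|a l]]] //=; rewrite ?ltail_cons ?lhead_cons //=.
case: (CodeSeq.decode nx) => [|b l'] //=.
by case: (CodeSeq.decode ni) => [|c l''] //=; rewrite ?lhead_cons.
Qed.

Fixpoint tree_enc (t : GenTree.tree unit) : nat :=
  if t is GenTree.Node n f then lcons n (lenc (map tree_enc f)) else 0.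

Definition forest_enc (p : seq (GenTree.tree unit) * seq (seq (GenTree.tree unit))) :=
  cpair (lenc (map tree_enc p.1)) (lenc (map (fun f => lenc (map tree_enc f)) p.2)).

Local Notation FOREST := (plook (ptail CVN)).
Local Notation LEAF := (PComp punpickle_sum (phead CVN)).

Fact pgentree_decode_key : unit. Proof. by []. Qed.
Definition pgentree_decode := locked_with pgentree_decode_key
  (pcvrec (pite CVN (PPair PZero PZero)
    (pite LEAF FOREST
      (pite (ppred LEAF) (PPair (pcons PZero (PFst FOREST)) (PSnd FOREST))
        (pite (ppred (ppred LEAF)) (PPair PZero (pcons (PFst FOREST) (PSnd FOREST)))
           (PPair (pcons (pcons (psub LEAF (pconst 3)) (PFst FOREST)) (phead (PSnd FOREST)))
                  (ptail (PSnd FOREST)))))))).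

Lemma den_pgentree_decode l : den pgentree_decode (lenc l) =
  forest_enc (foldr (@GenTree.decode_step unit) ([::], [::]) (pmap unpickle_sum l)).
Proof.
rewrite /pgentree_decode unlock.
elim: l => [|a l IH]; rewrite den_pcvrec; den_simpl => //.
rewrite den_punpickle_sum hist_at_lt ?ltn_lcons // IH /=.
case: (unpickle_sum a) => [[n|[]]|] //=;
  case: (foldr _ _ _) => fs1 fs2; rewrite /forest_enc /=; den_simpl => //.
case: n => [|n] /=; den_simpl => //.
have -> : n.+3 - 3 = n by lia.
by case: fs2 => [|f fs2] //=; rewrite ?lhead_cons ?ltail_cons.
Qed.

Lemma tree_to_codeK : ocancel tree_to_code code_to_tree.
Proof.
elim/GenTree.tree_ind => [[]|n f IH] //=.
case: f IH => [|t1 [|t2 [|t3 f]]] /= IH; case: n => [|[|[|[|[|[|[|[|n]]]]]]]] //=.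
all: case: IH => [IH1 IH]; case: (tree_to_code t1) IH1 => //= c1 IH1.
  by rewrite IH1.
all: by case: IH => [IH2 _]; case: (tree_to_code t2) IH2 => //= c2 IH2; rewrite IH1 IH2.
Qed.

Local Notation CHILDREN := (ptail CVN).

(* Nodes 0-3 encode leaves, nodes 4-6 binary and node 7 unary constructors. *)
Definition code_wf_step := pite CVN PZero
  (pite (psub (phead CVN) (pconst 3)) (pisz CHILDREN)
    (pite (psub (phead CVN) (pconst 6))
       (pand (pnz CHILDREN) (pand (pnz (ptail CHILDREN))
          (pand (pisz (ptail (ptail CHILDREN)))
             (pand (plook (phead CHILDREN)) (plook (phead (ptail CHILDREN)))))))
       (pite (psub (phead CVN) (pconst 7))
          (pand (pnz CHILDREN) (pand (pisz (ptail CHILDREN)) (plook (phead CHILDREN))))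
          PZero))).

Fact pcode_wf_key : unit. Proof. by []. Qed.
Definition pcode_wf := locked_with pcode_wf_key (pcvrec code_wf_step).

Lemma pcode_wfE : pcode_wf = pcvrec code_wf_step.
Proof. by rewrite /pcode_wf unlock. Qed.

Lemma den_pcode_wf_node n ch : den pcode_wf (lcons n ch) =
  if n <= 3 then nat_of_bool (ch == 0) else
  if n <= 6 then
    if (ch != 0) && (ltail ch != 0) && (ltail (ltail ch) == 0) then
      if den pcode_wf (lhead ch) is 0 then 0 else den pcode_wf (lhead (ltail ch))
    else 0
  else if n == 7 then (if (ch != 0) && (ltail ch == 0) then den pcode_wf (lhead ch) else 0)
  else 0.
Proof.
rewrite [in LHS]pcode_wfE den_pcvrec /code_wf_step; den_simpl.
have lt_head : lhead ch < lcons n ch := leq_ltn_trans (lhead_leq ch) (ltn_lcons n ch).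
have lt_head2 : lhead (ltail ch) < lcons n ch.
  exact: leq_ltn_trans (lhead_leq _) (leq_ltn_trans (ltail_leq _) (ltn_lcons n ch)).
rewrite !hist_at_lt // -pcode_wfE {lt_head lt_head2} [lcons n ch]/lcons.
case: n => [|[|[|[|[|[|[|[|n]]]]]]]] /=;
  case: (ch == 0); case: (ltail ch == 0); case: (ltail (ltail ch) == 0);
  by case: (den pcode_wf (lhead ch)).
Qed.

Lemma den_pcode_wf t : den pcode_wf (tree_enc t) = (tree_to_code t != None).
Proof.
elim/GenTree.tree_ind: t => [[]|n f IH].
  by rewrite pcode_wfE den_pcvrec /code_wf_step; den_simpl.
rewrite [tree_enc _]/= den_pcode_wf_node.
case: f IH => [|t1 [|t2 [|t3 f]]] /= IH; rewrite ?ltail_cons ?lhead_cons /=.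
- by case: n => [|[|[|[|[|[|[|[|n]]]]]]]].
- case: IH => [-> _]; case: n => [|[|[|[|[|[|[|[|n]]]]]]]] //=.
  by case: (tree_to_code t1).
- case: IH => [-> [-> _]]; case: n => [|[|[|[|[|[|[|[|n]]]]]]]] //=;
  by case: (tree_to_code t1); case: (tree_to_code t2).
- by case: n => [|[|[|[|[|[|[|[|n]]]]]]]].
Qed.

Definition code_enc (c : code) : nat := tree_enc (code_to_tree c).

Local Notation TREES := (PFst (PComp pgentree_decode (pdecode_seq PVar))).

(* Ill-formed Goedel numbers denote [CZero], whose encoding is [1]. *)
Fact pcode_key : unit. Proof. by []. Qed.
Definition pcode := locked_with pcode_key
  (pite TREES (pconst 1) (pite (PComp pcode_wf (phead TREES)) (pconst 1) (phead TREES))).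

Lemma den_pcode g : den pcode g = code_enc (decode g).
Proof.
rewrite /pcode unlock /decode unpickle_codeE; den_simpl.
rewrite den_pdecode_seq den_pgentree_decode /GenTree.decode.
case: (foldr _ _ _) => [[|t fs1] fs2]; rewrite /forest_enc; den_simpl => //=.
rewrite den_pcode_wf; case E: (tree_to_code t) => [c|] //=.
by rewrite -(tree_to_codeK t) E.
Qed.

(** * An abstract machine for [eval] *)

(* A state pairs a control (evaluate a tree on an input with some fuel, or return a
   result) with a stack of frames, coded as a list. *)
Definition oenc (o : option nat) := if o is Some y then y.+1 else 0.

Definition st_eval k t x st := cpair (cpair 0 (cpair k (cpair t x))) st.
Definition st_ret r st := cpair (cpair 1 r) st.

Definition fr_pair1 k g x := cpair 0 (cpair k (cpair g x)).
Definition fr_pair2 a := cpair 1 a.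
Definition fr_comp k f := cpair 2 (cpair k f).
Definition fr_rec k g a i m := cpair 3 (cpair k (cpair g (cpair a (cpair i m)))).
Definition fr_mu k f x i m := cpair 4 (cpair k (cpair f (cpair x (cpair i m)))).

Local Notation EVAL k t x := (PPair PZero (PPair k (PPair t x))).
Local Notation RET r := (PPair (pconst 1) r).
Local Notation PAIR1 k g x := (PPair PZero (PPair k (PPair g x))).
Local Notation PAIR2 a := (PPair (pconst 1) a).
Local Notation COMP k f := (PPair (pconst 2) (PPair k f)).
Local Notation REC k g a i m :=
  (PPair (pconst 3) (PPair k (PPair g (PPair a (PPair i m))))).
Local Notation MU k f x i m :=
  (PPair (pconst 4) (PPair k (PPair f (PPair x (PPair i m))))).

Local Notation CONTROL := (PFst PVar).
Local Notation STACK := (PSnd PVar).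
Local Notation ARGS := (PSnd CONTROL).

Local Notation FUEL := (PFst ARGS).
Local Notation TREE := (PFst (PSnd ARGS)).
Local Notation INPUT := (PSnd (PSnd ARGS)).
Local Notation NODE := (phead TREE).
Local Notation SUB1 := (phead (ptail TREE)).
Local Notation SUB2 := (phead (ptail (ptail TREE))).
Local Notation FUEL' := (ppred FUEL).

Definition eval_case :=
  pite FUEL (PPair (RET PZero) STACK)
  (pite NODE (PPair (RET (pconst 1)) STACK)
  (pite (psub NODE (pconst 1)) (PPair (RET (PSucc (PSucc INPUT))) STACK)
  (pite (psub NODE (pconst 2)) (PPair (RET (PSucc (PFst INPUT))) STACK)
  (pite (psub NODE (pconst 3)) (PPair (RET (PSucc (PSnd INPUT))) STACK)
  (pite (psub NODE (pconst 4))
     (PPair (EVAL FUEL' SUB1 INPUT) (pcons (PAIR1 FUEL' SUB2 INPUT) STACK))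
  (pite (psub NODE (pconst 5))
     (PPair (EVAL FUEL' SUB2 INPUT) (pcons (COMP FUEL' SUB1) STACK))
  (pite (psub NODE (pconst 6))
     (PPair (EVAL FUEL' SUB1 (PFst INPUT))
            (pcons (REC FUEL' SUB2 (PFst INPUT) PZero (PSnd INPUT)) STACK))
  (pite FUEL' (PPair (RET PZero) STACK)
     (PPair (EVAL FUEL' SUB1 (PPair INPUT PZero))
            (pcons (MU FUEL' SUB1 INPUT (ppred FUEL') PZero) STACK)))))))))).

Local Notation FRAME := (phead STACK).
Local Notation REST := (ptail STACK).
Local Notation TAG := (PFst FRAME).
Local Notation FIELDS := (PSnd FRAME).
Local Notation VALUE := (ppred ARGS).
Local Notation F1 := (PFst FIELDS).
Local Notation F2 := (PFst (PSnd FIELDS)).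
Local Notation F3 := (PFst (PSnd (PSnd FIELDS))).
Local Notation F4 := (PFst (PSnd (PSnd (PSnd FIELDS)))).
Local Notation F5 := (PSnd (PSnd (PSnd (PSnd FIELDS)))).

Definition ret_case :=
  pite STACK PVar
  (pite ARGS (PPair (RET PZero) REST)
  (pite TAG (PPair (EVAL F1 F2 (PSnd (PSnd FIELDS))) (pcons (PAIR2 VALUE) REST))
  (pite (psub TAG (pconst 1)) (PPair (RET (PSucc (PPair FIELDS VALUE))) REST)
  (pite (psub TAG (pconst 2)) (PPair (EVAL (PFst FIELDS) (PSnd FIELDS) VALUE) REST)
  (pite (psub TAG (pconst 3))
     (pite (peq F4 F5)
        (PPair (EVAL F1 F2 (PPair (PPair F3 F4) VALUE))
               (pcons (REC F1 F2 F3 (PSucc F4) F5) REST))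
        (PPair (RET ARGS) REST))
  (pite VALUE (PPair (RET (PSucc F5)) REST)
    (pite F4 (PPair (RET PZero) REST)
      (PPair (EVAL F1 F2 (PPair F3 (PSucc F5)))
             (pcons (MU F1 F2 F3 (ppred F4) (PSucc F5)) REST))))))))).

Fact pstep_key : unit. Proof. by []. Qed.
Definition pstep := locked_with pstep_key (pite (PFst CONTROL) eval_case ret_case).

Definition step := den pstep.

Ltac step_tac := rewrite /step /pstep unlock /eval_case /ret_case /st_eval /st_ret
  /fr_pair1 /fr_pair2 /fr_comp /fr_rec /fr_mu; den_simpl.

Lemma step_eval0 t x st : step (st_eval 0 t x st) = st_ret 0 st.
Proof. by step_tac. Qed.
Lemma step_CZero k x st : step (st_eval k.+1 (code_enc CZero) x st) = st_ret 1 st.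
Proof. by step_tac. Qed.
Lemma step_CSucc k x st : step (st_eval k.+1 (code_enc CSucc) x st) = st_ret x.+2 st.
Proof. by step_tac. Qed.
Lemma step_CFst k x st :
  step (st_eval k.+1 (code_enc CFst) x st) = st_ret (cunpair x).1.+1 st.
Proof. by step_tac. Qed.
Lemma step_CSnd k x st :
  step (st_eval k.+1 (code_enc CSnd) x st) = st_ret (cunpair x).2.+1 st.
Proof. by step_tac. Qed.
Lemma step_CPair k f g x st : step (st_eval k.+1 (code_enc (CPair f g)) x st) =
  st_eval k (code_enc f) x (lcons (fr_pair1 k (code_enc g) x) st).
Proof. by step_tac. Qed.
Lemma step_CComp k f g x st : step (st_eval k.+1 (code_enc (CComp f g)) x st) =
  st_eval k (code_enc g) x (lcons (fr_comp k (code_enc f)) st).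
Proof. by step_tac. Qed.
Lemma step_CRec k f g x st : step (st_eval k.+1 (code_enc (CRec f g)) x st) =
  st_eval k (code_enc f) (cunpair x).1
    (lcons (fr_rec k (code_enc g) (cunpair x).1 0 (cunpair x).2) st).
Proof. by step_tac. Qed.
Lemma step_CMu0 f x st : step (st_eval 1 (code_enc (CMu f)) x st) = st_ret 0 st.
Proof. by step_tac. Qed.
Lemma step_CMu k f x st : step (st_eval k.+2 (code_enc (CMu f)) x st) =
  st_eval k.+1 (code_enc f) (cpair x 0) (lcons (fr_mu k.+1 (code_enc f) x k 0) st).
Proof. by step_tac. Qed.

Lemma step_halt r : step (st_ret r 0) = st_ret r 0.
Proof. by step_tac. Qed.
Lemma step_ret_undef fr st : step (st_ret 0 (lcons fr st)) = st_ret 0 st.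
Proof. by step_tac. Qed.
Lemma step_ret_pair1 y k g x st :
  step (st_ret y.+1 (lcons (fr_pair1 k g x) st)) = st_eval k g x (lcons (fr_pair2 y) st).
Proof. by step_tac. Qed.
Lemma step_ret_pair2 y a st :
  step (st_ret y.+1 (lcons (fr_pair2 a) st)) = st_ret (cpair a y).+1 st.
Proof. by step_tac. Qed.
Lemma step_ret_comp y k f st :
  step (st_ret y.+1 (lcons (fr_comp k f) st)) = st_eval k f y st.
Proof. by step_tac. Qed.
Lemma step_ret_rec_done y k g a m st :
  step (st_ret y.+1 (lcons (fr_rec k g a m m) st)) = st_ret y.+1 st.
Proof. by step_tac; rewrite eqxx. Qed.
Lemma step_ret_rec y k g a i m st : i != m ->
  step (st_ret y.+1 (lcons (fr_rec k g a i m) st)) =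
  st_eval k g (cpair (cpair a i) y) (lcons (fr_rec k g a i.+1 m) st).
Proof. by move/negbTE => neq_im; step_tac; rewrite neq_im. Qed.
Lemma step_ret_mu_found k f x i m st :
  step (st_ret 1 (lcons (fr_mu k f x i m) st)) = st_ret m.+1 st.
Proof. by step_tac. Qed.
Lemma step_ret_mu_stop y k f x m st :
  step (st_ret y.+2 (lcons (fr_mu k f x 0 m) st)) = st_ret 0 st.
Proof. by step_tac. Qed.
Lemma step_ret_mu y k f x i m st : step (st_ret y.+2 (lcons (fr_mu k f x i.+1 m) st)) =
  st_eval k f (cpair x m.+1) (lcons (fr_mu k f x i m.+1) st).
Proof. by step_tac. Qed.

Definition reaches s s' := exists n, iter n step s = s'.

Lemma reaches_refl s : reaches s s.
Proof. by exists 0. Qed.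

Lemma reaches_trans s1 s2 s3 : reaches s1 s2 -> reaches s2 s3 -> reaches s1 s3.
Proof. by move=> [n1 <-] [n2 <-]; exists (n2 + n1); rewrite iterD. Qed.

Lemma reaches_step s s2 s3 : step s = s2 -> reaches s2 s3 -> reaches s s3.
Proof. by move=> step_s; apply: reaches_trans; exists 1; rewrite /= step_s. Qed.

Lemma reaches_step1 s s' : step s = s' -> reaches s s'.
Proof. by move/reaches_step; apply; apply: reaches_refl. Qed.

Section OneMoreFuel.

Variable k : nat.
Hypothesis reaches_eval_k : forall c x st,
  reaches (st_eval k (code_enc c) x st) (st_ret (oenc (eval k c x)) st).

Lemma rec_loop_undef ef eg a i j :
  rec_loop ef eg a i = None -> i <= j -> rec_loop ef eg a j = None.
Proof.
move=> undef_i; elim: j => [|j IH]; first by rewrite leqn0 => /eqP <-.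
by rewrite leq_eqVlt => /orP [/eqP <- //|/IH]; rewrite rec_loopS => ->.
Qed.

Lemma reaches_rec_loop f g a i n st : i <= n ->
  reaches (st_ret (oenc (rec_loop (eval k f) (eval k g) a i))
                  (lcons (fr_rec k (code_enc g) a i n) st))
          (st_ret (oenc (rec_loop (eval k f) (eval k g) a n)) st).
Proof.
move: {2}(n - i) (erefl (n - i)) => d; elim: d i => [|d IHd] i d_eq le_in.
  have -> : i = n by lia.
  case: (rec_loop _ _ a n) => [v|]; apply: reaches_step1.
    exact: step_ret_rec_done.
  exact: step_ret_undef.
case E: (rec_loop _ _ a i) => [v|] /=; last first.
  by rewrite (rec_loop_undef E le_in); apply: reaches_step1; apply: step_ret_undef.
have neq_in : i != n by apply/eqP; lia.
apply: reaches_step (step_ret_rec _ _ _ _ _ neq_in) _.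
apply: reaches_trans (reaches_eval_k _ _ _) _.
have -> : eval k g (cpair (cpair a i) v) = rec_loop (eval k f) (eval k g) a i.+1.
  by rewrite rec_loopS E.
by apply: IHd; lia.
Qed.
Lemma reaches_mu_loop f x i m st :
  reaches (st_eval k (code_enc f) (cpair x m) (lcons (fr_mu k (code_enc f) x i m) st))
          (st_ret (oenc (mu_loop (eval k f) x i.+1 m)) st).
Proof.
elim: i m => [|i IHi] m; apply: reaches_trans (reaches_eval_k _ _ _) _; rewrite mu_loopS;
  case: (eval k f (cpair x m)) => [[|y]|] /=.
- exact/reaches_step1/step_ret_mu_found.
- exact/reaches_step1/step_ret_mu_stop.
- exact/reaches_step1/step_ret_undef.
- exact/reaches_step1/step_ret_mu_found.
- exact: reaches_step (step_ret_mu _ _ _ _ _ _ _) (IHi _).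
- exact/reaches_step1/step_ret_undef.
Qed.

End OneMoreFuel.

Theorem reaches_eval k c x st :
  reaches (st_eval k (code_enc c) x st) (st_ret (oenc (eval k c x)) st).
Proof.
elim: k c x st => [|k IH] c x st; first exact/reaches_step1/step_eval0.
case: c => [||||f g|f g|f g|f]; try by apply: reaches_step1;
  rewrite ?step_CZero ?step_CSucc ?step_CFst ?step_CSnd.
- rewrite eval_CPair; apply: reaches_step (step_CPair _ _ _ _ _) _.
  apply: reaches_trans (IH _ _ _) _; case: (eval k f x) => [a|] /=; last first.
    exact/reaches_step1/step_ret_undef.
  apply: reaches_step (step_ret_pair1 _ _ _ _ _) _; apply: reaches_trans (IH _ _ _) _.
  case: (eval k g x) => [b|] /=; apply: reaches_step1.
    exact: step_ret_pair2.
  exact: step_ret_undef.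
- rewrite eval_CComp; apply: reaches_step (step_CComp _ _ _ _ _) _.
  apply: reaches_trans (IH _ _ _) _; case: (eval k g x) => [v|] /=.
    exact: reaches_step (step_ret_comp _ _ _ _) (IH _ _ _).
  exact/reaches_step1/step_ret_undef.
- rewrite eval_CRec; apply: reaches_step (step_CRec _ _ _ _ _) _.
  by apply: reaches_trans (IH _ _ _) _; apply: (reaches_rec_loop IH).
- case: k IH => [|k] IH; first exact/reaches_step1/step_CMu0.
  rewrite eval_CMu; apply: reaches_step (step_CMu _ _ _ _) _.
  exact: reaches_mu_loop.
Qed.

Lemma iter_step_halted r n : iter n step (st_ret r 0) = st_ret r 0.
Proof. by elim: n => //= n ->; apply: step_halt. Qed.

Lemma st_ret_inj r r' : st_ret r 0 = st_ret r' 0 -> r = r'.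
Proof. by move/(congr1 (fun s => (cunpair (cunpair s).1).2)); rewrite !cpair1 !cpair2. Qed.

Definition run k t x n := iter n step (st_eval k t x 0).

Lemma run_halted k c x n r : run k (code_enc c) x n = st_ret r 0 -> r = oenc (eval k c x).
Proof.
have [n0 run_n0] := reaches_eval k c x 0; rewrite /run => run_n.
case: (leqP n n0) => [le_nn0|/ltnW lt_n0n]; apply: st_ret_inj.
  by rewrite -run_n0 -(subnK le_nn0) iterD run_n iter_step_halted.
by rewrite -run_n -(subnK lt_n0n) iterD run_n0 iter_step_halted.
Qed.

Lemma run_eventually k c x : exists n0, forall n, n0 <= n ->
  run k (code_enc c) x n = st_ret (oenc (eval k c x)) 0.
Proof.
have [n0 run_n0] := reaches_eval k c x 0.
by exists n0 => n /subnK <-; rewrite /run iterD run_n0 iter_step_halted.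
Qed.

(** * The arithmetical normal form *)

Definition halted s := ((cunpair s).2 == 0) && ((cunpair (cunpair s).1).1 == 1).
Definition result s := (cunpair (cunpair s).1).2.

Definition transfers k k' t1 t2 x y n :=
  [&& halted (run k t1 x n), halted (run k' t2 x n)
    & (result (run k t1 x n) == y.+1) ==> (result (run k' t2 x n) == y.+1)].

(* [b] codes an input, a candidate output and a fuel; [c] a fuel and a number of steps. *)
Definition matrix (inL : pred nat) (g a b c : nat) :=
  let x := (cunpair b).1 in let y := (cunpair (cunpair b).2).1 in
  let k := (cunpair (cunpair b).2).2 in let k' := (cunpair c).1 in let n := (cunpair c).2 in
  [&& inL a, transfers k k' (code_enc (decode g)) (code_enc (decode a)) x y n
           & transfers k k' (code_enc (decode a)) (code_enc (decode g)) x y n].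

(* [pmatrix] reads its input as <inL a, <g, <a, <b, c>>>>. *)
Local Notation BIT := (PFst PVar).
Local Notation ZG := (PFst (PSnd PVar)).
Local Notation ZA := (PFst (PSnd (PSnd PVar))).
Local Notation ZB := (PFst (PSnd (PSnd (PSnd PVar)))).
Local Notation ZC := (PSnd (PSnd (PSnd (PSnd PVar)))).

Definition prun k t :=
  piter pstep (PPair (PPair PZero (PPair k (PPair t (PFst ZB)))) PZero) (PSnd ZC).
Definition phalted s := pand (pisz (PSnd s)) (peq (PFst (PFst s)) (pconst 1)).
Definition presult s := PSnd (PFst s).
Definition ptransfers t1 t2 :=
  let r1 := prun (PSnd (PSnd ZB)) t1 in let r2 := prun (PFst ZC) t2 in
  pand (phalted r1) (pand (phalted r2)
    (pite (peq (presult r1) (PSucc (PFst (PSnd ZB)))) (pconst 1)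
          (peq (presult r2) (PSucc (PFst (PSnd ZB)))))).

Definition pmatrix := pand (peq BIT (pconst 1))
  (pand (ptransfers (PComp pcode ZG) (PComp pcode ZA))
        (ptransfers (PComp pcode ZA) (PComp pcode ZG))).

Lemma den_pmatrix (inL : pred nat) g a b c :
  den pmatrix (cpair (inL a) (cpair g (cpair a (cpair b c)))) = matrix inL g a b c.
Proof.
rewrite /pmatrix /ptransfers /prun /phalted /presult; den_simpl; rewrite !den_pcode.
rewrite /matrix /transfers /halted /result /run -/step.
by case: (inL a) => //=; do !case: (_ == _) => //=.
Qed.

Lemma halted_st_ret r : halted (st_ret r 0).
Proof. by rewrite /halted /st_ret !cpair1 !cpair2. Qed.

Lemma result_st_ret r : result (st_ret r 0) = r.
Proof. by rewrite /result /st_ret cpair1 cpair2. Qed.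

Lemma haltedP s : halted s -> s = st_ret (result s) 0.
Proof.
move=> /andP [/eqP stack0 /eqP tag1]; rewrite /st_ret /result.
by rewrite -{1}(cunpairK s) stack0 -{1}(cunpairK (cunpair s).1) tag1.
Qed.

Lemma result_run k c x n :
  halted (run k (code_enc c) x n) -> result (run k (code_enc c) x n) = oenc (eval k c x).
Proof. by move/haltedP/run_halted. Qed.

Lemma oenc_eqS o y : (oenc o == y.+1) = (o == Some y).
Proof. by case: o. Qed.

Lemma transfers_sound k k' c1 c2 x y n : transfers k k' (code_enc c1) (code_enc c2) x y n ->
  eval k c1 x = Some y -> eval k' c2 x = Some y.
Proof.
move=> /and3P [halt1 halt2]; rewrite (result_run halt1) (result_run halt2) !oenc_eqS.
by move=> /implyP out12 out1; apply/eqP/out12/eqP.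
Qed.

Lemma transfers_complete k k' c1 c2 x y :
  (eval k c1 x = Some y -> eval k' c2 x = Some y) ->
  exists n0, forall n, n0 <= n -> transfers k k' (code_enc c1) (code_enc c2) x y n.
Proof.
move=> out12; have [n1 run1] := run_eventually k c1 x.
have [n2 run2] := run_eventually k' c2 x.
exists (maxn n1 n2) => n; rewrite geq_max => /andP [le1 le2].
rewrite /transfers run1 // run2 // !halted_st_ret !result_st_ret !oenc_eqS /=.
by apply/implyP => /eqP /out12 ->.
Qed.

Lemma same_fun_sym g a : same_fun g a -> same_fun a g.
Proof. by move=> ga x y; rewrite ga. Qed.

Lemma same_fun_fuel g a x y k : same_fun g a ->
  exists k', eval k (decode g) x = Some y -> eval k' (decode a) x = Some y.
Proof.
move=> ga; have [out|nout] := eqVneq (eval k (decode g) x) (Some y); last first.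
  by exists 0 => /eqP; rewrite (negbTE nout).
have [k' out'] : phi a x y by apply/ga; exists k.
by exists k'.
Qed.

Lemma matrix_complete (inL : pred nat) g a b : inL a -> same_fun g a ->
  exists c, matrix inL g a b c.
Proof.
move=> La ga; rewrite /matrix.
move: (cunpair b).1 (cunpair (cunpair b).2).1 (cunpair (cunpair b).2).2 => x y k.
have [k1 out1] := same_fun_fuel x y k ga.
have [k2 out2] := same_fun_fuel x y k (same_fun_sym ga).
have [n1 tr1] := transfers_complete (fun out => eval_fuel_mono (leq_maxl k1 k2) (out1 out)).
have [n2 tr2] := transfers_complete (fun out => eval_fuel_mono (leq_maxr k1 k2) (out2 out)).
exists (cpair (maxn k1 k2) (maxn n1 n2)).
by rewrite cpair1 cpair2 La tr1 ?tr2 ?leq_maxl ?leq_maxr.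
Qed.

Lemma matrix_sound (inL : pred nat) g a :
  (forall b, exists c, matrix inL g a b c) -> inL a /\ same_fun g a.
Proof.
move=> Mga; split; first by have [c /and3P []] := Mga 0.
move=> x y; split=> -[k out]; have [c /and3P [_]] := Mga (cpair x (cpair y k));
  rewrite !cpair2 !cpair1 => tr_ga tr_ag.
- by exists (cunpair c).1; apply: transfers_sound tr_ga out.
- by exists (cunpair c).1; apply: transfers_sound tr_ag out.
Qed.

Definition sigma3_rel (inL : pred nat) (z : nat) : bool :=
  let: (g, z) := cunpair z in let: (a, z) := cunpair z in let: (b, c) := cunpair z in
  matrix inL g a b c.

Lemma sigma3_relE inL g a b c :
  sigma3_rel inL (cpair g (cpair a (cpair b c))) = matrix inL g a b c.
Proof. by rewrite /sigma3_rel !cpairK. Qed.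

Lemma computable_sigma3_rel (inL : pred nat) :
  computable inL -> computable (sigma3_rel inL).
Proof.
move=> cL; have cA := computable_comp computable_fst computable_snd.
apply: computable_ext (computable_comp (computable_den pmatrix)
  (computable_pair (computable_comp cL cA) computable_id)) => z.
have [g [a [b [c ->]]]] := cpair4_surj z.
by rewrite /comp cpair2 cpair1 den_pmatrix sigma3_relE.
Qed.

Theorem mainTheorem8 (psi L : nat -> Prop) :
  functional psi -> captures L psi -> Sigma03 psi.
Proof.
move=> psi_fun [decL L_psi L_captures].
exists (sigma3_rel (decide L)); split.
  exact/decidable_set_computable/computable_sigma3_rel/computable_decide.
move=> g; split.
- move=> /L_captures [a La ga]; exists a => b.
  have [c Mc] := matrix_complete b (introT (decideP L a) La) (same_fun_sym ga).
  by exists c; rewrite sigma3_relE.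
- move=> [a Mga]; have [/decideP La ga] : decide L a /\ same_fun g a.
    by apply: matrix_sound => b; have [c] := Mga b; exists c; rewrite -sigma3_relE.
  exact: (psi_fun _ _ ga).2 (L_psi _ La).
Qed.
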